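(* Let $f,f'\colon\mathbb F_2^{10}\to\mathbb F_2$ be given by $f(\mathbf x)=x_1x_6\oplus x_2x_7\oplus x_3x_8\oplus x_4x_9\oplus x_5x_{10}\oplus x_1x_2x_3x_4x_5$ and $f'(\mathbf x)=f(\mathbf x)\oplus x_4\oplus x_6\oplus x_8\oplus x_{10}\oplus x_1x_2\oplus x_2x_3\oplus x_1x_2x_3\oplus x_2x_4x_5\oplus x_1x_2x_4x_5\oplus x_2x_3x_4x_5$. Then $f$ and $f'$ are bent and not extended-affine equivalent, yet the translation designs $\operatorname{dev}(D_f)$ and $\operatorname{dev}(D_{f'})$ are isomorphic.
   Context: For a Boolean function $f$ on $\mathbb F_2^n$, $D_f=\{\mathbf x: f(\mathbf x)=1\}$, and $\operatorname{dev}(D_f)$ is the incidence structure with point set $\mathbb F_2^n$ and blocks $D_f+\mathbf g$, $\mathbf g\in\mathbb F_2^n$. Boolean functions $f,f'$ on $\mathbb F_2^n$ are EA-equivalent if $f=f'\circ A_2\oplus A_3$ for an affine permutation $A_2$ of $\mathbb F_2^n$ and an affine function $A_3$. A Boolean function is bent if all its Walsh coefficients $\sum_{\mathbf x}(-1)^{f(\mathbf x)\oplus\langle\mathbf a,\mathbf x\rangle}$ equal $\pm2^{n/2}$. Isomorphism of incidence structures: $M=PM'Q$ for permutation matrices $P,Q$ acting on incidence matrices. *)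

From HB Require Import structures.
From mathcomp Require Import all_boot all_order all_algebra all_fingroup.
Set Implicit Arguments. Unset Strict Implicit. Unset Printing Implicit Defensive.
Import GRing.Theory Num.Theory.
Local Open Scope ring_scope.

Notation vec n := 'rV['F_2]_n.

Definition boolfun (n : nat) := vec n -> 'F_2.

Definition dotv (n : nat) (a x : vec n) : 'F_2 := \sum_(i < n) a ord0 i * x ord0 i.

Definition supp (n : nat) (f : boolfun n) : {set vec n} := [set x | f x == 1].

Definition walsh (n : nat) (f : boolfun n) (a : vec n) : int :=
  \sum_(x : vec n) (-1) ^+ (nat_of_ord (f x + dotv a x)).

Definition is_bent (n : nat) (f : boolfun n) : Prop :=
  forall a : vec n, walsh f a = 2 ^+ (n./2) \/ walsh f a = - 2 ^+ (n./2).

(* EA-equivalence: f = f' o A2 + A3, A2 affine permutation x |-> x M + b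
   (M invertible), A3 affine function x |-> <u,x> + c. *)
Definition EA_equiv (n : nat) (f f' : boolfun n) : Prop :=
  exists (M : 'M['F_2]_n) (b u : vec n) (c : 'F_2),
    M \in unitmx /\ forall x : vec n, f x = f' (x *m M + b) + (dotv u x + c).

Definition translate (n : nat) (D : {set vec n}) (g : vec n) : {set vec n} :=
  [set x + g | x in D].

(* incidence matrix of dev(D_f): rows = points, columns = blocks D_f + g,
   both indexed via the enumeration of F_2^n *)
Definition dev_inc (n : nat) (f : boolfun n) : 'M[int]_(#|{: vec n}|) :=
  \matrix_(i, j) ((enum_val i \in translate (supp f) (enum_val j)) : nat)%:R.

Definition inc_iso (k : nat) (M M' : 'M[int]_k) : Prop :=
  exists (s t : 'S_k), M = perm_mx s *m M' *m perm_mx t.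

(* coordinate x_k, 1 <= k <= 10 *)
Definition xc (x : vec 10) (k : nat) : 'F_2 := x ord0 (@inord 9 k.-1).

Definition f10 : boolfun 10 := fun x =>
  xc x 1 * xc x 6 + xc x 2 * xc x 7 + xc x 3 * xc x 8 + xc x 4 * xc x 9
  + xc x 5 * xc x 10 + xc x 1 * xc x 2 * xc x 3 * xc x 4 * xc x 5.

Definition f10' : boolfun 10 := fun x =>
  f10 x + xc x 4 + xc x 6 + xc x 8 + xc x 10 + xc x 1 * xc x 2
  + xc x 2 * xc x 3 + xc x 1 * xc x 2 * xc x 3 + xc x 2 * xc x 4 * xc x 5
  + xc x 1 * xc x 2 * xc x 4 * xc x 5 + xc x 2 * xc x 3 * xc x 4 * xc x 5.

(* Bentness and the isomorphism of the designs are finite verifications.  Each function on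
   F_2^10 is mirrored by a program on bit lists, on which the Walsh spectrum and the identity
   f(p + q) = f'(sigma p + tau q) are checked by evaluation; the latter says that the point
   bijection sigma together with the block bijection D_f + q |-> D_f' + tau q preserves
   incidence.  EA-inequivalence is detected by the number of (a, b, c, z) with
   D_a D_b D_c h(z) = 1: third derivatives kill affine functions and are transported along
   affine permutations.  Both functions are of Maiorana-McFarland type x.y + g(x) up to terms
   affine in y, so their derivatives along (0, t) are affine; hence D_a D_b D_c h(z) does not
   change when a, b, c or z moves by (0, t), which cuts the count from 2^40 to 2^20
   evaluations. *)

From HB Require Import structures.
From mathcomp Require Import all_boot all_order all_algebra all_fingroup.
Set Implicit Arguments. Unset Strict Implicit. Unset Printing Implicit Defensive.
Import GRing.Theory.
Local Open Scope ring_scope.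

Definition b2F (b : bool) : 'F_2 := (b : nat)%:R.

Lemma b2F_add a b : b2F a + b2F b = b2F (a (+) b).
Proof. by case: a; case: b; apply/val_inj. Qed.

Lemma b2F_mul a b : b2F a * b2F b = b2F (a && b).
Proof. by case: a; case: b; apply/val_inj. Qed.

Lemma val_b2F b : nat_of_ord (b2F b) = b.
Proof. by case: b. Qed.

Lemma b2F_neq0 (x : 'F_2) : b2F (x != 0) = x.
Proof. by case: x => [[|[|//]] ?]; apply/val_inj. Qed.

Lemma F2_addxx (x : 'F_2) : x + x = 0.
Proof. by rewrite -[x]b2F_neq0 b2F_add addbb. Qed.

Lemma F2_add_eq0 (x y : 'F_2) : x + y = 0 -> x = y.
Proof. by move/(congr1 (+%R^~ y)); rewrite -addrA F2_addxx addr0 add0r. Qed.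

Lemma F2_ind (P : 'F_2 -> Prop) : P 0 -> P 1 -> forall x, P x.
Proof. by move=> P0 P1 x; rewrite -[x]b2F_neq0; case: (x != 0). Qed.

Ltac F2_identity := let x := fresh "x" in
  repeat (intro x; pattern x; revert x; apply: F2_ind); by apply/val_inj.

Fixpoint bitseqs n : seq (seq bool) :=
  if n is n'.+1 then [seq b :: s | b <- [:: false; true], s <- bitseqs n'] else [:: [::]].

Lemma bitseqsS n :
  bitseqs n.+1 = [seq false :: s | s <- bitseqs n] ++ [seq true :: s | s <- bitseqs n].
Proof. by rewrite /= cats0. Qed.

Lemma mem_bitseqs n s : (s \in bitseqs n) = (size s == n).
Proof.
elim: n s => [|n IH] [|b s] //; rewrite bitseqsS mem_cat.
  by apply/norP; split; apply/mapP => -[].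
have mem_cons c : (b :: s \in [seq c :: t | t <- bitseqs n]) = (b == c) && (s \in bitseqs n).
  by apply/mapP/andP => [[t Ht [-> ->]] | [/eqP -> Hs]] //; exists s.
by rewrite !mem_cons /= eqSS -IH; case: b mem_cons => _; rewrite /= ?orbF.
Qed.

Lemma size_bitseqs n : size (bitseqs n) = (2 ^ n)%N.
Proof. by elim: n => [|n IH] //; rewrite bitseqsS size_cat !size_map IH expnS mul2n addnn. Qed.

Lemma uniq_bitseqs n : uniq (bitseqs n).
Proof.
have cons_inj (b : bool) : injective (cons b) by move=> s t [].
elim: n => [|n IH] //; rewrite bitseqsS cat_uniq !map_inj_uniq ?IH //=.
by rewrite andbT; apply/hasPn => _ /mapP [s _ ->]; apply/mapP => -[].
Qed.

Lemma bitseqs_cat m k : bitseqs (m + k) = [seq s ++ t | s <- bitseqs m, t <- bitseqs k].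
Proof.
elim: m => [|m IH]; first by rewrite /= cats0 map_id.
by rewrite addSn !bitseqsS IH allpairs_cat !allpairs_mapl !map_allpairs.
Qed.

Definition tovec n (s : seq bool) : vec n := \row_(i < n) b2F (nth false s i).
Definition ofvec n (x : vec n) : seq bool := [seq x ord0 i != 0 | i <- enum 'I_n].

Lemma size_ofvec n (x : vec n) : size (ofvec x) = n.
Proof. by rewrite size_map size_enum_ord. Qed.

Lemma ofvecK n : cancel (@ofvec n) (tovec n).
Proof.
move=> x; apply/rowP => i; rewrite mxE (nth_map i) ?size_enum_ord //.
by rewrite nth_ord_enum b2F_neq0.
Qed.

Lemma tovecK n s : size s = n -> ofvec (tovec n s) = s.
Proof.
move=> Hs; apply: (@eq_from_nth _ false); rewrite size_ofvec // => i Hi.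
rewrite (nth_map (Ordinal Hi)) ?size_enum_ord // mxE.
have -> : nth (Ordinal Hi) (enum 'I_n) i = Ordinal Hi by apply/val_inj/nth_enum_ord.
by case: (nth false s i).
Qed.

Lemma big_vec_bitseqs (R : nmodType) n (F : vec n -> R) :
  \sum_(x : vec n) F x = \sum_(s <- bitseqs n) F (tovec n s).
Proof.
rewrite -(big_map (tovec n) xpredT) -big_enum /=; apply/perm_big/uniq_perm.
- exact: enum_uniq.
- rewrite map_inj_in_uniq ?uniq_bitseqs // => s t.
  by rewrite !mem_bitseqs => /eqP Hs /eqP Ht Est; rewrite -(tovecK Hs) -(tovecK Ht) Est.
- move=> x; rewrite mem_enum; symmetry; apply/mapP.
  by exists (ofvec x); rewrite ?ofvecK // mem_bitseqs size_ofvec.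
Qed.

Definition xorl (s t : seq bool) : seq bool := [seq p.1 (+) p.2 | p <- zip s t].

Fixpoint dotb (s t : seq bool) : bool :=
  if (s, t) is (a :: s', b :: t') then (a && b) (+) dotb s' t' else false.

Lemma size_xorl s t : size s = size t -> size (xorl s t) = size s.
Proof. by move=> Est; rewrite size_map size_zip Est minnn. Qed.

Lemma xorl_cat s1 s2 t1 t2 : size s1 = size t1 ->
  xorl (s1 ++ s2) (t1 ++ t2) = xorl s1 t1 ++ xorl s2 t2.
Proof. by move=> Es; rewrite /xorl zip_cat // map_cat. Qed.

Lemma xorl_falsel n s : size s = n -> xorl (nseq n false) s = s.
Proof. by elim: s n => [|b s IH] [|n] //= [/IH]; rewrite /xorl /= => ->. Qed.

Lemma xorl_falser n s : size s = n -> xorl s (nseq n false) = s.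
Proof. by elim: s n => [|b s IH] [|n] //= [/IH]; rewrite /xorl /= addbF => ->. Qed.

Lemma tovecD n s t : size s = size t ->
  tovec n s + tovec n t = tovec n (xorl s t).
Proof.
move=> Est; apply/rowP => i; rewrite !mxE b2F_add.
have [lt_is | le_si] := ltnP i (size s); last by rewrite !nth_default ?size_xorl -?Est.
by rewrite (nth_map (false, false)) ?size_zip -?Est ?minnn // nth_zip.
Qed.

Lemma dotv_tovec n s t : size s = n -> size t = n ->
  dotv (tovec n s) (tovec n t) = b2F (dotb s t).
Proof.
elim: n s t => [|n IH] [|a s] [|b t] //=; first by rewrite /dotv big_ord0.
move=> [Hs] [Ht]; rewrite /dotv big_ord_recl !mxE /= b2F_mul -b2F_add -IH //.
by congr (_ + _); apply: eq_bigr => i _; rewrite !mxE.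
Qed.

(** * Bentness *)

Definition represents n (h : boolfun n) (hb : seq bool -> bool) : Prop :=
  forall s, size s = n -> h (tovec n s) = b2F (hb s).

Lemma walsh_count n (h : boolfun n) hb a : represents h hb -> size a = n ->
  walsh h (tovec n a) = (2 ^ n)%:Z - (2 * count (fun s => hb s (+) dotb a s) (bitseqs n))%:Z.
Proof.
move=> hbP Ha; set P := fun s => _.
have -> : walsh h (tovec n a) = \sum_(s <- bitseqs n) (-1) ^+ (P s : nat).
  rewrite /walsh big_vec_bitseqs !big_seq.
  apply: eq_bigr => s; rewrite mem_bitseqs => /eqP Hs.
  by rewrite hbP // dotv_tovec // b2F_add val_b2F.
rewrite -size_bitseqs -(count_predC P) mul2n -addnn !PoszD opprD addrA.
rewrite [(count P _)%:Z + _]addrC addrK.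
elim: (bitseqs n) => [|s r IH]; first by rewrite big_nil.
rewrite big_cons IH /=; case: (P s) => /=; rewrite ?expr1 ?expr0 !add0n !PoszD.
  by rewrite opprD addrCA addrA.
by rewrite addrA.
Qed.

Definition bent_check n (hb : seq bool -> bool) : bool :=
  all (fun a => let w := (2 ^ n)%:Z - (2 * count (fun s => hb s (+) dotb a s) (bitseqs n))%:Z in
    (w == 2 ^+ n./2) || (w == - 2 ^+ n./2)) (bitseqs n).

Lemma is_bent_check n (h : boolfun n) hb : represents h hb -> bent_check n hb -> is_bent h.
Proof.
move=> hbP /allP bentP a; rewrite -(ofvecK a) (walsh_count hbP) ?size_ofvec //.
have /bentP : ofvec a \in bitseqs n by rewrite mem_bitseqs size_ofvec.
by case/orP => /eqP ->; [left | right].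
Qed.

(** * Isomorphic translation designs *)

Lemma vec_addxx n (q : vec n) : q + q = 0.
Proof. by apply/rowP => i; rewrite !mxE F2_addxx. Qed.

Lemma mem_translate n (D : {set vec n}) p q : (p \in translate D q) = (p + q \in D).
Proof.
apply/imsetP/idP => [[x Dx ->] | Dpq]; first by rewrite -addrA vec_addxx addr0.
by exists (p + q); rewrite // -addrA vec_addxx addr0.
Qed.

Lemma inc_iso_dev n (f f' : boolfun n) (sigma tau : vec n -> vec n) :
  injective sigma -> injective tau ->
  (forall p q, f (p + q) = f' (sigma p + tau q)) ->
  inc_iso (dev_inc f) (dev_inc f').
Proof.
move=> sigma_inj tau_inj ff'.
pose conj_rank (g : vec n -> vec n) (i : 'I_#|{: vec n}|) := enum_rank (g (enum_val i)).
have conj_rank_inj g : injective g -> injective (conj_rank g).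
  by move=> g_inj i j; rewrite /conj_rank => /enum_rank_inj /g_inj /enum_val_inj.
exists (perm (conj_rank_inj _ sigma_inj)), (perm (conj_rank_inj _ tau_inj))^-1%g.
apply/matrixP => i j; rewrite -row_permE -col_permE !mxE !permE /conj_rank !enum_rankK.
by rewrite !mem_translate !inE ff'.
Qed.

Definition lift_map n (F : seq bool -> seq bool) (x : vec n) : vec n := tovec n (F (ofvec x)).

Definition inverse_check n (F G : seq bool -> seq bool) : bool :=
  all (fun s => (size (F s) == n) && (G (F s) == s)) (bitseqs n).

Lemma inverse_checkP n F G s : inverse_check n F G -> size s = n ->
  size (F s) = n /\ G (F s) = s.
Proof.
move=> /allP FG Hs.
by have /FG /andP[/eqP ? /eqP ?] : s \in bitseqs n by rewrite mem_bitseqs Hs.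
Qed.

Lemma lift_map_inj n F G : inverse_check n F G -> injective (@lift_map n F).
Proof.
move=> FG x y /(congr1 (fun z => tovec n (G (ofvec z)))).
have [[Fx GFx] [Fy GFy]] :=
  (inverse_checkP FG (size_ofvec x), inverse_checkP FG (size_ofvec y)).
by rewrite !tovecK // GFx GFy !ofvecK.
Qed.

Definition dev_iso_check n (hb hb' : seq bool -> bool) (sigma tau : seq bool -> seq bool) : bool :=
  all (fun p => all (fun q => hb (xorl p q) == hb' (xorl (sigma p) (tau q)))
    (bitseqs n)) (bitseqs n).

Lemma inc_iso_dev_check n (h h' : boolfun n) hb hb' sigma sigma' tau tau' :
  represents h hb -> represents h' hb' ->
  inverse_check n sigma sigma' -> inverse_check n tau tau' ->
  dev_iso_check n hb hb' sigma tau -> inc_iso (dev_inc h) (dev_inc h').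
Proof.
move=> hbP hbP' sigmaK tauK /allP isoP.
apply: (inc_iso_dev (lift_map_inj sigmaK) (lift_map_inj tauK)) => p q.
have [Sp Sq] := (size_ofvec p, size_ofvec q).
have [[Sp' _] [Sq' _]] := (inverse_checkP sigmaK Sp, inverse_checkP tauK Sq).
rewrite -{1}(ofvecK p) -{1}(ofvecK q) !tovecD ?Sp ?Sq ?Sp' ?Sq' //.
rewrite hbP ?hbP' ?size_xorl ?Sp ?Sq ?Sp' ?Sq' //.
have /isoP/allP/(_ (ofvec q)) : ofvec p \in bitseqs n by rewrite mem_bitseqs Sp.
by rewrite mem_bitseqs Sq eqxx => /(_ isT)/eqP ->.
Qed.

(** * Third derivatives and an EA-invariant *)

Section Derivatives.
Variable n : nat.
Implicit Types (h g : boolfun n) (a b c v w z : vec n).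

Definition deriv h a : boolfun n := fun z => h (z + a) + h z.

Definition deriv3 h a b c : boolfun n := deriv (deriv (deriv h a) b) c.

Definition is_affine g := exists (u : vec n) (k : 'F_2), forall x, g x = dotv u x + k.

Lemma dotvD (u x y : vec n) : dotv u (x + y) = dotv u x + dotv u y.
Proof. by rewrite /dotv -big_split; apply: eq_bigr => i _; rewrite mxE mulrDr. Qed.

Lemma eq_deriv h g : h =1 g -> forall a, deriv h a =1 deriv g a.
Proof. by move=> hg a z; rewrite /deriv !hg. Qed.

Lemma deriv_dirD h a v w : deriv h (a + v) w = deriv h a w + deriv h v (w + a).
Proof. by rewrite /deriv addrA; move: (h (w + a + v)) (h w) (h (w + a)); F2_identity. Qed.

Lemma derivC h a v w : deriv (deriv h a) v w = deriv (deriv h v) a w.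
Proof.
rewrite /deriv (addrAC w v a).
by move: (h (w + a + v)) (h (w + v)) (h (w + a)) (h w); F2_identity.
Qed.

Lemma deriv_cst g k : (forall x, g x = k) -> forall a w, deriv g a w = 0.
Proof. by move=> gk a w; rewrite /deriv !gk F2_addxx. Qed.

Lemma deriv_affine g u k : (forall x, g x = dotv u x + k) -> forall a w, deriv g a w = dotv u a.
Proof.
move=> gk a w; rewrite /deriv !gk dotvD {gk}.
by move: (dotv u w) (dotv u a) k; F2_identity.
Qed.

Lemma deriv2C h a b v w : deriv (deriv (deriv h a) b) v w = deriv (deriv (deriv h v) a) b w.
Proof. by rewrite derivC (eq_deriv (derivC h a v)). Qed.

Lemma deriv3C12 h a b c z : deriv3 h a b c z = deriv3 h b a c z.
Proof. exact: eq_deriv (derivC h a b) c z. Qed.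

Lemma deriv3C23 h a b c z : deriv3 h a b c z = deriv3 h a c b z.
Proof. exact: derivC. Qed.

Lemma deriv_deriv3 h a b c v z : deriv (deriv3 h a b c) v z = deriv3 (deriv h v) a b c z.
Proof. by rewrite derivC (eq_deriv (deriv2C h a b v)). Qed.

Lemma deriv_comp_affine h h' (M : 'M['F_2]_n) e (l : boolfun n) :
  (forall z, h z = h' (z *m M + e) + l z) ->
  forall a z, deriv h a z = deriv h' (a *m M) (z *m M + e) + (l (z + a) + l z).
Proof. by move=> hh' a z; rewrite /deriv !hh' mulmxDl (addrAC (z *m M)) addrACA. Qed.

Lemma deriv3_comp_affine h h' (M : 'M['F_2]_n) e u k :
  (forall x, h x = h' (x *m M + e) + (dotv u x + k)) ->
  forall a b c z, deriv3 h a b c z = deriv3 h' (a *m M) (b *m M) (c *m M) (z *m M + e).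
Proof.
move=> hh' a b c z.
have F2_cancel (x y k' : 'F_2) : x + y + k' + (x + k') = y by move: x y k'; F2_identity.
have h1 w : deriv h a w = deriv h' (a *m M) (w *m M + e) + dotv u a.
  by rewrite (deriv_comp_affine hh') dotvD F2_cancel.
have h2 w : deriv (deriv h a) b w = deriv (deriv h' (a *m M)) (b *m M) (w *m M + e) + 0.
  by rewrite (deriv_comp_affine (l := fun=> dotv u a) h1) F2_addxx.
by rewrite /deriv3 (deriv_comp_affine (l := fun=> 0) h2) !addr0.
Qed.

Definition deriv3_weight h : nat :=
  \sum_a \sum_b \sum_c \sum_z nat_of_ord (deriv3 h a b c z).

Lemma deriv3_weight_EA h h' : EA_equiv h h' -> deriv3_weight h = deriv3_weight h'.
Proof.
case=> M [e [u [k [M_unit hh']]]].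
have M_inj : injective (fun x : vec n => x *m M) := can_inj (mulmxK M_unit).
have A_inj : injective (fun x : vec n => x *m M + e) by move=> x y /addIr /M_inj.
rewrite /deriv3_weight; symmetry; rewrite (reindex_inj M_inj); apply: eq_bigr => a _.
rewrite (reindex_inj M_inj); apply: eq_bigr => b _.
rewrite (reindex_inj M_inj); apply: eq_bigr => c _.
by rewrite (reindex_inj A_inj); apply: eq_bigr => z _; rewrite (deriv3_comp_affine hh').
Qed.

End Derivatives.

Section AffineDirection.
Variables (n : nat) (h : boolfun n) (v : vec n).
Hypothesis affine_v : is_affine (deriv h v).

Lemma deriv2_deriv_affine a b w : deriv (deriv (deriv h v) a) b w = 0.
Proof. by have [u [k duk]] := affine_v; exact: deriv_cst (deriv_affine duk a) b w. Qed.

Lemma deriv3_shiftr a b c z : deriv3 h a b (c + v) z = deriv3 h a b c z.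
Proof.
have := deriv2_deriv_affine a b (z + c); rewrite -deriv2C => deriv3_v.
by rewrite /deriv3 deriv_dirD deriv3_v addr0.
Qed.

Lemma deriv3_shiftl a b c z : deriv3 h (a + v) b c z = deriv3 h a b c z.
Proof. by rewrite deriv3C12 deriv3C23 deriv3_shiftr -deriv3C23 -deriv3C12. Qed.

Lemma deriv3_shiftm a b c z : deriv3 h a (b + v) c z = deriv3 h a b c z.
Proof. by rewrite deriv3C23 deriv3_shiftr -deriv3C23. Qed.

Lemma deriv3_shift_point a b c z : deriv3 h a b c (z + v) = deriv3 h a b c z.
Proof.
apply: F2_add_eq0; rewrite -[_ + _]/(deriv (deriv3 h a b c) v z) deriv_deriv3.
exact: deriv_cst (deriv2_deriv_affine a b) c z.
Qed.

End AffineDirection.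

Section Splitting.
Variables m k : nat.

Definition lshift_vec (s : seq bool) : vec (m + k) := tovec (m + k) (s ++ nseq k false).
Definition rshift_vec (t : seq bool) : vec (m + k) := tovec (m + k) (nseq m false ++ t).

Lemma tovec_cat s t : size s = m -> size t = k ->
  tovec (m + k) (s ++ t) = lshift_vec s + rshift_vec t.
Proof.
move=> Hs Ht; rewrite tovecD ?size_cat ?Hs ?Ht ?size_nseq // xorl_cat ?Hs ?size_nseq //.
by rewrite (xorl_falser Hs) (xorl_falsel Ht).
Qed.

Lemma sum_rshift_invariant (F : vec (m + k) -> nat) :
  (forall x t, size t = k -> F (x + rshift_vec t) = F x) ->
  (\sum_x F x = 2 ^ k * \sum_(s <- bitseqs m) F (lshift_vec s))%N.
Proof.
move=> F_inv; rewrite big_vec_bitseqs bitseqs_cat big_allpairs_dep big_distrr /=.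
apply: eq_big_seq => s; rewrite mem_bitseqs => /eqP Hs.
transitivity (\sum_(t <- bitseqs k) F (lshift_vec s)).
  by apply: eq_big_seq => t; rewrite mem_bitseqs => /eqP Ht; rewrite tovec_cat // F_inv.
by rewrite big_const_seq count_predT size_bitseqs iter_addn_0 mulnC.
Qed.

Lemma deriv3_weight_split (h : boolfun (m + k)) :
  (forall t, size t = k -> is_affine (deriv h (rshift_vec t))) ->
  deriv3_weight h = (2 ^ (4 * k) *
    \sum_(s1 <- bitseqs m) \sum_(s2 <- bitseqs m) \sum_(s3 <- bitseqs m) \sum_(s4 <- bitseqs m)
      nat_of_ord (deriv3 h (lshift_vec s1) (lshift_vec s2) (lshift_vec s3) (lshift_vec s4)))%N.
Proof.
move=> affine_h; rewrite [(4 * k)%N]mulnC expnM !expnS expn0 muln1 -!mulnA /deriv3_weight.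
rewrite sum_rshift_invariant => [|x t /affine_h affine_t]; last first.
  by apply: eq_bigr => b _; apply: eq_bigr => c _; apply: eq_bigr => z _; rewrite deriv3_shiftl.
congr (_ * _); rewrite !big_distrr; apply: eq_bigr => s1 _.
rewrite sum_rshift_invariant => [|x t /affine_h affine_t]; last first.
  by apply: eq_bigr => c _; apply: eq_bigr => z _; rewrite deriv3_shiftm.
congr (_ * _); rewrite !big_distrr; apply: eq_bigr => s2 _.
rewrite sum_rshift_invariant => [|x t /affine_h affine_t]; last first.
  by apply: eq_bigr => z _; rewrite deriv3_shiftr.
congr (_ * _); rewrite !big_distrr; apply: eq_bigr => s3 _.
by rewrite sum_rshift_invariant // => x t /affine_h affine_t; rewrite deriv3_shift_point.
Qed.

End Splitting.

Arguments lshift_vec m k s : clear implicits.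
Arguments rshift_vec m k t : clear implicits.

Definition derivb (hb : seq bool -> bool) (a : seq bool) : seq bool -> bool :=
  fun z => hb (xorl z a) (+) hb z.

Definition deriv3b (hb : seq bool -> bool) (a b c : seq bool) : seq bool -> bool :=
  derivb (derivb (derivb hb a) b) c.

Lemma represents_deriv n (h : boolfun n) hb a : represents h hb -> size a = n ->
  represents (deriv h (tovec n a)) (derivb hb a).
Proof.
move=> hbP Ha s Hs.
by rewrite /deriv /derivb tovecD ?Hs ?Ha // !hbP ?size_xorl ?Hs ?Ha // b2F_add.
Qed.

Definition affine_deriv_check n (hb : seq bool -> bool) (a u : seq bool) : bool :=
  all (fun w => derivb hb a w == dotb u w (+) derivb hb a (nseq n false)) (bitseqs n).

Lemma is_affine_deriv_check n (h : boolfun n) hb a u :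
  represents h hb -> size a = n -> size u = n ->
  affine_deriv_check n hb a u -> is_affine (deriv h (tovec n a)).
Proof.
move=> hbP Ha Hu /allP affP; exists (tovec n u), (b2F (derivb hb a (nseq n false))) => x.
have Hx := size_ofvec x.
rewrite -(ofvecK x) (represents_deriv hbP Ha) // dotv_tovec // b2F_add.
by have /affP /eqP -> : ofvec x \in bitseqs n by rewrite mem_bitseqs Hx.
Qed.

Definition deriv3_count m k (hb : seq bool -> bool) : nat :=
  let ext s := s ++ nseq k false in
  sumn [seq sumn [seq sumn [seq
    count (fun s4 => deriv3b hb (ext s1) (ext s2) (ext s3) (ext s4)) (bitseqs m)
  | s3 <- bitseqs m] | s2 <- bitseqs m] | s1 <- bitseqs m].

Lemma deriv3_weight_count m k (h : boolfun (m + k)) hb : represents h hb ->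
  (forall t, size t = k -> is_affine (deriv h (rshift_vec m k t))) ->
  deriv3_weight h = (2 ^ (4 * k) * deriv3_count m k hb)%N.
Proof.
move=> hbP affine_h; rewrite deriv3_weight_split //; congr (_ * _).
have ext_size s : s \in bitseqs m -> size (s ++ nseq k false) = (m + k)%N.
  by rewrite mem_bitseqs size_cat size_nseq => /eqP ->.
rewrite /deriv3_count sumnE big_map; apply: eq_big_seq => s1 /ext_size S1.
rewrite sumnE big_map; apply: eq_big_seq => s2 /ext_size S2.
rewrite sumnE big_map; apply: eq_big_seq => s3 /ext_size S3.
rewrite -sumn_count sumnE big_map; apply: eq_big_seq => s4 /ext_size S4.
have hb3P := represents_deriv (represents_deriv (represents_deriv hbP S1) S2) S3.
by rewrite /deriv3 /lshift_vec hb3P // val_b2F.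
Qed.

(* For [x . y + g(x)] plus a function affine in [y], the derivative in direction [(0, t)]
   is [x . t] plus a constant. *)
Definition rshift_affine_check m (hb : seq bool -> bool) : bool :=
  all (fun t => affine_deriv_check (m + m) hb (nseq m false ++ t) (t ++ nseq m false))
    (bitseqs m).

Lemma is_affine_rshift m (h : boolfun (m + m)) hb :
  represents h hb -> rshift_affine_check m hb ->
  forall t, size t = m -> is_affine (deriv h (rshift_vec m m t)).
Proof.
move=> hbP /allP affP t Ht.
have /affP check_t : t \in bitseqs m by rewrite mem_bitseqs Ht.
by apply: (is_affine_deriv_check hbP _ _ check_t); rewrite size_cat size_nseq Ht // addnC.
Qed.

Definition f10b (s : seq bool) : bool :=
  if s is [:: x1; x2; x3; x4; x5; x6; x7; x8; x9; x10] then
    (x1 && x6) (+) (x2 && x7) (+) (x3 && x8) (+) (x4 && x9) (+) (x5 && x10)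
    (+) (x1 && x2 && x3 && x4 && x5)
  else false.

Definition f10b' (s : seq bool) : bool :=
  if s is [:: x1; x2; x3; x4; x5; x6; x7; x8; x9; x10] then
    f10b s (+) x4 (+) x6 (+) x8 (+) x10 (+) (x1 && x2) (+) (x2 && x3) (+) (x1 && x2 && x3)
    (+) (x2 && x4 && x5) (+) (x1 && x2 && x4 && x5) (+) (x2 && x3 && x4 && x5)
  else false.

Lemma represents_f10 : represents f10 f10b.
Proof.
case=> [|x1 [|x2 [|x3 [|x4 [|x5 [|x6 [|x7 [|x8 [|x9 [|x10 [|? ?]]]]]]]]]]] // _.
by rewrite /f10 /xc !mxE !inordK //= !b2F_mul !b2F_add.
Qed.

Lemma represents_f10' : represents f10' f10b'.
Proof.
case=> [|x1 [|x2 [|x3 [|x4 [|x5 [|x6 [|x7 [|x8 [|x9 [|x10 [|? ?]]]]]]]]]]] // _.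
by rewrite /f10' /f10 /xc !mxE !inordK //= !b2F_mul !b2F_add.
Qed.

Definition sigma10 (s : seq bool) : seq bool :=
  if s is [:: x1; x2; x3; x4; x5; x6; x7; x8; x9; x10] then
    [:: ~~ x1; x2; ~~ x3; x4; x5 (+) x1 (+) true;
        x6 (+) (x2 && x3) (+) x10; x7 (+) (x1 && x3) (+) true; x8 (+) (x1 && x2); ~~ x9; x10]
  else s.

Definition sigma10_inv (s : seq bool) : seq bool :=
  if s is [:: x1; x2; x3; x4; x5; x6; x7; x8; x9; x10] then
    [:: ~~ x1; x2; ~~ x3; x4; x5 (+) x1;
        x6 (+) (x2 && ~~ x3) (+) x10; x7 (+) (~~ x1 && ~~ x3) (+) true; x8 (+) (~~ x1 && x2);
        ~~ x9; x10]
  else s.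

Definition tau10 (s : seq bool) : seq bool :=
  if s is [:: x1; x2; x3; x4; x5; x6; x7; x8; x9; x10] then
    [:: x1; x2; x3; x4; x5 (+) x1; x6 (+) (x2 && x3) (+) x10; x7 (+) (x1 && x3);
        x8 (+) (x1 && x2); x9; x10]
  else s.

Lemma sigma10K : inverse_check 10 sigma10 sigma10_inv. Proof. by vm_compute. Qed.
Lemma tau10K : inverse_check 10 tau10 tau10. Proof. by vm_compute. Qed.
Lemma dev_iso_f10 : dev_iso_check 10 f10b f10b' sigma10 tau10. Proof. by vm_compute. Qed.
Lemma bent_f10 : bent_check 10 f10b. Proof. by vm_compute. Qed.
Lemma bent_f10' : bent_check 10 f10b'. Proof. by vm_compute. Qed.
Lemma rshift_affine_f10 : rshift_affine_check 5 f10b. Proof. by vm_compute. Qed.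
Lemma rshift_affine_f10' : rshift_affine_check 5 f10b'. Proof. by vm_compute. Qed.
Lemma count_f10 : deriv3_count 5 5 f10b != deriv3_count 5 5 f10b'.
Proof. by vm_compute. Qed.

Lemma not_EA_equiv_f10 : ~ EA_equiv f10 f10'.
Proof.
have affine_f := is_affine_rshift (m := 5) represents_f10 rshift_affine_f10.
have affine_f' := is_affine_rshift (m := 5) represents_f10' rshift_affine_f10'.
move/deriv3_weight_EA/eqP.
rewrite (deriv3_weight_count (m := 5) represents_f10 affine_f).
rewrite (deriv3_weight_count (m := 5) represents_f10' affine_f').
rewrite eqn_pmul2l => [same_count|]; last by rewrite expn_gt0.
by move: count_f10; rewrite same_count.
Qed.

Theorem mainTheorem5 :
  is_bent f10 /\ is_bent f10' /\ ~ EA_equiv f10 f10' /\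
  inc_iso (dev_inc f10) (dev_inc f10').
Proof.
split; first exact: is_bent_check represents_f10 bent_f10.
split; first exact: is_bent_check represents_f10' bent_f10'.
split; first exact: not_EA_equiv_f10.
exact: inc_iso_dev_check represents_f10 represents_f10' sigma10K tau10K dev_iso_f10.
Qed.
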